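(* Given a unit implicational base $(X,\Sigma)$, one can decide whether $\Sigma$ admits a rank function $\rho$, and compute such a $\rho$ if it exists, in time polynomial in the size of $(X,\Sigma)$.
   Context: A unit implicational base on a finite set $X$ is a set $\Sigma$ of implications $A\to b$ with $A\subseteq X$, $b\in X$. A rank function on $\Sigma$ is a map $\rho:X\to\mathbb{N}$ such that $\rho(a)=\rho(b)+1$ whenever $A\to b\in\Sigma$ and $a\in A$. *)

From Stdlib Require Import List Arith.
Import ListNotations.

(* The ground set X is {0, ..., n-1}; an implication A -> b is a pair
   (A, b) with A a list of elements of X (read as a set) and b in X. *)
Definition implication := (list nat * nat)%type.

Definition wf_base (n : nat) (Sigma : list implication) : Prop :=
  forall A b, In (A, b) Sigma -> b < n /\ (forall a, In a A -> a < n).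

Definition is_rank (Sigma : list implication) (rho : nat -> nat) : Prop :=
  forall A b, In (A, b) Sigma -> forall a, In a A -> rho a = rho b + 1.

(* Each executed instruction costs one time step.
   Arithmetic is restricted to +1 / -1, so all values stay polynomially
   bounded in (input values + elapsed time): this is a standard model
   polynomially equivalent to Turing machines. *)
Inductive instr : Type :=
| Inc   (r : nat)
| Dec   (r : nat)              (* R[r] := R[r] - 1  (truncated) *)
| Mov   (d s : nat)
| Ld    (d a : nat)
| St    (a s : nat)
| Jz    (r : nat) (l : nat)
| Jmp   (l : nat).

Definition program := list instr.

Record config : Type := Cfg { pc : nat; regs : nat -> nat; mem : nat -> nat }.

Definition upd (f : nat -> nat) (i v : nat) : nat -> nat :=
  fun j => if Nat.eqb j i then v else f j.

Definition halted (P : program) (c : config) : Prop := length P <= pc c.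

Definition step (P : program) (c : config) : config :=
  match nth_error P (pc c) with
  | None => c
  | Some i =>
    let R := regs c in let M := mem c in let p := pc c in
    match i with
    | Inc r     => Cfg (S p) (upd R r (S (R r))) M
    | Dec r     => Cfg (S p) (upd R r (pred (R r))) M
    | Mov d s   => Cfg (S p) (upd R d (R s)) M
    | Ld d a    => Cfg (S p) (upd R d (M (R a))) M
    | St a s    => Cfg (S p) R (upd M (R a) (R s))
    | Jz r l    => if Nat.eqb (R r) 0 then Cfg l R M else Cfg (S p) R M
    | Jmp l     => Cfg l R M
    end
  end.

Fixpoint exec (P : program) (k : nat) (c : config) : config :=
  match k with 0 => c | S k' => exec P k' (step P c) end.

Definition init (w : list nat) : config :=
  Cfg 0 (fun _ => 0) (fun i => nth i w 0).

(* [n; m; |A_1|; A_1 ...; b_1; ...; |A_m|; A_m ...; b_m] *)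
Definition encode_impl (ab : implication) : list nat :=
  length (fst ab) :: fst ab ++ [snd ab].

Definition encode (n : nat) (Sigma : list implication) : list nat :=
  n :: length Sigma :: flat_map encode_impl Sigma.

Definition base_size (n : nat) (Sigma : list implication) : nat :=
  n + fold_right (fun ab s => length (fst ab) + 1 + s) 0 Sigma.

Definition correct_output (Sigma : list implication) (M : nat -> nat) : Prop :=
  ((exists rho, is_rank Sigma rho) <-> M 0 <> 0) /\
  (M 0 <> 0 -> is_rank Sigma (fun x => M (1 + x))).

(* A rank function solves the difference constraints rho a = rho b + 1, so rank functions
   can be searched for by monotone relaxation starting from rho = 0: while some constraint
   is violated, raise its smaller side to the value the constraint forces.  Every raise
   keeps rho below every rank function.  If a rank function exists, closing the gaps
   between its values on X gives one with values at most n, of total at most n * n; as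
   each raise increases the total of rho, a budget of n * n raises suffices, and running
   out of budget proves that no rank function exists.  Once no constraint is violated,
   rho is a rank function.  On the successor RAM all arithmetic is unary, so a pass over
   Sigma costs O(size * n^2) steps, and at most n * n + 1 passes are made. *)

From Stdlib Require Import List Arith Lia FunctionalExtensionality.
Import ListNotations.

(* Simplification then evaluates register lookups but keeps register files as chains of
   [upd]. *)
Arguments upd f i v j /.

Lemma upd_same f i v : upd f i v i = v.
Proof. unfold upd. now rewrite Nat.eqb_refl. Qed.

Lemma upd_other f i v j : j <> i -> upd f i v j = f j.
Proof. unfold upd. intros Hji. now apply Nat.eqb_neq in Hji as ->. Qed.

(** * Relaxation *)

Fixpoint sum_upto (f : nat -> nat) (n : nat) : nat :=
  match n with 0 => 0 | S n' => sum_upto f n' + f n' end.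

Lemma sum_upto_le f g n : (forall x, x < n -> f x <= g x) -> sum_upto f n <= sum_upto g n.
Proof.
  induction n as [|n IH]; intros Hfg; cbn; [lia|].
  specialize (IH (fun x Hx => Hfg x ltac:(lia))). specialize (Hfg n). lia.
Qed.

Lemma sum_upto_lt f g n y : (forall x, x < n -> f x <= g x) -> y < n -> f y < g y ->
  sum_upto f n < sum_upto g n.
Proof.
  induction n as [|n IH]; intros Hfg Hy Hlt; cbn; [lia|].
  destruct (Nat.eq_dec y n) as [->|Hne].
  - assert (sum_upto f n <= sum_upto g n) by (apply sum_upto_le; intros; apply Hfg; lia). lia.
  - assert (sum_upto f n < sum_upto g n) by (apply IH; auto; lia). specialize (Hfg n). lia.
Qed.

Lemma sum_upto_bound f n c : (forall x, x < n -> f x <= c) -> sum_upto f n <= n * c.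
Proof.
  induction n as [|n IH]; intros Hf; cbn; [lia|].
  specialize (IH (fun x Hx => Hf x ltac:(lia))). specialize (Hf n). lia.
Qed.

Definition rank_compress (n : nat) (sg : nat -> nat) (x : nat) : nat :=
  length (filter (fun v => existsb (fun y => sg y =? v) (seq 0 n)) (seq 0 (sg x))).

Lemma rank_compress_le n sg x : rank_compress n sg x <= n.
Proof.
  unfold rank_compress. transitivity (length (map sg (seq 0 n)));
    [|now rewrite length_map, length_seq].
  apply NoDup_incl_length; [apply NoDup_filter, seq_NoDup|].
  intros v Hv. apply filter_In in Hv as [_ Hv].
  apply existsb_exists in Hv as [y [Hy Hyv]]. apply Nat.eqb_eq in Hyv as <-.
  now apply in_map.
Qed.

Lemma rank_compress_is_rank n Sigma sg :
  wf_base n Sigma -> is_rank Sigma sg -> is_rank Sigma (rank_compress n sg).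
Proof.
  intros Hwf Hsg A b HAb a Ha. unfold rank_compress.
  rewrite (Hsg A b HAb a Ha), Nat.add_1_r, seq_S, filter_app, length_app. cbn.
  enough (existsb (fun y => sg y =? sg b) (seq 0 n) = true) as -> by (cbn; lia).
  apply existsb_exists. exists b. split; [apply in_seq; apply Hwf in HAb; lia|apply Nat.eqb_refl].
Qed.

(* A state is (rho, budget, changed), the flag changed being 0 or 1 as in register 6. *)
Definition state := ((nat -> nat) * nat * nat)%type.

Definition relax (a b : nat) (s : state) : option state :=
  let '(rho, beta, ch) := s in
  if rho a <? S (rho b) then
    match beta with 0 => None | S beta' => Some (upd rho a (S (rho b)), beta', 1) end
  else if S (rho b) <? rho a then
    match beta with 0 => None | S beta' => Some (upd rho b (pred (rho a)), beta', 1) end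
  else Some s.

Fixpoint fold_opt {X : Type} (f : X -> state -> option state) (l : list X) (s : state)
  : option state :=
  match l with
  | [] => Some s
  | x :: l' => match f x s with None => None | Some s' => fold_opt f l' s' end
  end.

Definition relax_premises (A : list nat) (b : nat) : state -> option state :=
  fold_opt (fun a => relax a b) A.

Definition relax_pass (Sigma : list implication) : state -> option state :=
  fold_opt (fun ab => relax_premises (fst ab) (snd ab)) Sigma.

Lemma relax_premises_cons a A b s :
  relax_premises (a :: A) b s =
  match relax a b s with None => None | Some s' => relax_premises A b s' end.
Proof. reflexivity. Qed.

Lemma relax_pass_cons A b Sigma s :
  relax_pass ((A, b) :: Sigma) s =
  match relax_premises A b s with None => None | Some s' => relax_pass Sigma s' end.
Proof. reflexivity. Qed.

Definition progress (s s' : state) : Prop :=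
  let '(_, beta, _) := s in let '(_, beta', ch') := s' in ch' = 1 /\ beta' < beta.

Lemma progress_trans s1 s2 s3 : progress s1 s2 -> progress s2 s3 -> progress s1 s3.
Proof. destruct s1 as [[? ?] ?], s2 as [[? ?] ?], s3 as [[? ?] ?]; cbn; lia. Qed.

Section FoldOpt.
Variables (X : Type) (f : X -> state -> option state) (I : state -> Prop).

Lemma fold_opt_preserves l :
  (forall x s s', In x l -> I s -> f x s = Some s' -> I s') ->
  forall s s', I s -> fold_opt f l s = Some s' -> I s'.
Proof.
  induction l as [|x l IH]; intros Hf s s' Hs Hl; cbn in Hl.
  - now injection Hl as <-.
  - destruct (f x s) as [s1|] eqn:E; [|discriminate].
    apply (IH (fun y t t' Hy => Hf y t t' (or_intror Hy)) s1 s'); auto.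
    exact (Hf x s s1 (or_introl eq_refl) Hs E).
Qed.

Lemma fold_opt_defined l :
  (forall x s s', In x l -> I s -> f x s = Some s' -> I s') ->
  (forall x s, In x l -> I s -> f x s <> None) ->
  forall s, I s -> fold_opt f l s <> None.
Proof.
  induction l as [|x l IH]; intros Hf Hdef s Hs; cbn; [discriminate|].
  destruct (f x s) as [s1|] eqn:E; [|now destruct (Hdef x s (or_introl eq_refl) Hs E)].
  apply IH; [intros y t t' Hy; apply Hf; now right|intros y t Hy; apply Hdef; now right|].
  exact (Hf x s s1 (or_introl eq_refl) Hs E).
Qed.

Lemma fold_opt_progress (G : X -> state -> Prop) l :
  (forall x s s', In x l -> I s -> f x s = Some s' ->
     I s' /\ (s' = s /\ G x s \/ progress s s')) ->
  forall s s', I s -> fold_opt f l s = Some s' ->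
  I s' /\ (s' = s /\ (forall x, In x l -> G x s) \/ progress s s').
Proof.
  induction l as [|x l IH]; intros Hf s s' Hs Hl; cbn in Hl.
  - injection Hl as <-. split; [exact Hs|left; split; [reflexivity|intros _ []]].
  - destruct (f x s) as [s1|] eqn:E; [|discriminate].
    destruct (Hf x s s1 (or_introl eq_refl) Hs E) as [Hs1 Hstep].
    destruct (IH (fun y t t' Hy => Hf y t t' (or_intror Hy)) s1 s' Hs1 Hl) as [Hs' Hrest].
    split; [exact Hs'|].
    destruct Hstep as [[-> Hx]|Hp1], Hrest as [[-> Hl']|Hp2].
    + left. split; [reflexivity|]. intros y [<-|Hy]; auto.
    + now right.
    + now right.
    + right. exact (progress_trans _ _ _ Hp1 Hp2).
Qed.

End FoldOpt.

Definition bounded (V : nat) (s : state) : Prop :=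
  let '(rho, beta, _) := s in forall x, rho x + beta <= V.

Lemma relax_bounded V a b s s' : bounded V s -> relax a b s = Some s' -> bounded V s'.
Proof.
  destruct s as [[rho beta] ch]. intros HV Hr. unfold relax in Hr.
  destruct (Nat.ltb_spec (rho a) (S (rho b))); [|destruct (Nat.ltb_spec (S (rho b)) (rho a))].
  - destruct beta as [|beta]; [discriminate|]. injection Hr as <-. intros x.
    unfold upd. destruct (Nat.eqb_spec x a); [specialize (HV b)|specialize (HV x)]; lia.
  - destruct beta as [|beta]; [discriminate|]. injection Hr as <-. intros x.
    unfold upd. destruct (Nat.eqb_spec x b); [specialize (HV a)|specialize (HV x)]; lia.
  - now injection Hr as <-.
Qed.

Lemma relax_premises_bounded V A b s s' :
  bounded V s -> relax_premises A b s = Some s' -> bounded V s'.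
Proof. apply fold_opt_preserves. intros a t t' _. apply relax_bounded. Qed.

Lemma relax_pass_bounded V Sigma s s' :
  bounded V s -> relax_pass Sigma s = Some s' -> bounded V s'.
Proof. apply fold_opt_preserves. intros [A b] t t' _. apply relax_premises_bounded. Qed.

Definition below_ranks (Sigma : list implication) (rho : nat -> nat) : Prop :=
  forall sg, is_rank Sigma sg -> forall x, rho x <= sg x.

Definition estimate_inv (n : nat) (Sigma : list implication) (s : state) : Prop :=
  let '(rho, beta, _) := s in below_ranks Sigma rho /\ n * n <= sum_upto rho n + beta.

Lemma estimate_inv_init n Sigma : estimate_inv n Sigma (fun _ => 0, n * n, 0).
Proof. split; [intros sg _ x; lia|lia]. Qed.

Definition satisfied (a b : nat) (s : state) : Prop :=
  let '(rho, _, _) := s in rho a = rho b + 1.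

Section Relax.
Variables (n : nat) (Sigma : list implication) (a b : nat).
Hypotheses (Ha : a < n) (Hb : b < n) (Hab : forall sg, is_rank Sigma sg -> sg a = sg b + 1).

Lemma relax_progress s s' : estimate_inv n Sigma s -> relax a b s = Some s' ->
  estimate_inv n Sigma s' /\ (s' = s /\ satisfied a b s \/ progress s s').
Proof.
  destruct s as [[rho beta] ch]. intros [Hlow Hsum] Hr. unfold relax in Hr.
  destruct (Nat.ltb_spec (rho a) (S (rho b))); [|destruct (Nat.ltb_spec (S (rho b)) (rho a))].
  - destruct beta as [|beta]; [discriminate|]. injection Hr as <-.
    split; [split|right; cbn; lia].
    + intros sg Hsg x. unfold upd. destruct (Nat.eqb_spec x a) as [->|]; [|apply Hlow, Hsg].
      rewrite (Hab sg Hsg). specialize (Hlow sg Hsg b). lia.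
    + enough (sum_upto rho n < sum_upto (upd rho a (S (rho b))) n) by lia.
      apply (sum_upto_lt _ _ _ a); [intros x _; unfold upd; destruct (Nat.eqb_spec x a)| |];
        subst; rewrite ?upd_same; lia.
  - destruct beta as [|beta]; [discriminate|]. injection Hr as <-.
    split; [split|right; cbn; lia].
    + intros sg Hsg x. unfold upd. destruct (Nat.eqb_spec x b) as [->|]; [|apply Hlow, Hsg].
      specialize (Hab sg Hsg). specialize (Hlow sg Hsg a). lia.
    + enough (sum_upto rho n < sum_upto (upd rho b (pred (rho a))) n) by lia.
      apply (sum_upto_lt _ _ _ b); [intros x _; unfold upd; destruct (Nat.eqb_spec x b)| |];
        subst; rewrite ?upd_same; lia.
  - injection Hr as <-. split; [now split|left; cbn; split; [reflexivity|lia]].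
Qed.

Lemma relax_defined s : wf_base n Sigma -> (exists sg, is_rank Sigma sg) ->
  estimate_inv n Sigma s -> relax a b s <> None.
Proof.
  destruct s as [[rho beta] ch]. intros Hwf [sg0 Hsg0] [Hlow Hsum] Hr.
  set (sg := rank_compress n sg0).
  assert (Hsg : is_rank Sigma sg) by exact (rank_compress_is_rank n Sigma sg0 Hwf Hsg0).
  assert (Hsmall : sum_upto sg n <= n * n)
    by (apply sum_upto_bound; intros; apply rank_compress_le).
  specialize (Hab sg Hsg). specialize (Hlow sg Hsg).
  unfold relax in Hr.
  destruct (Nat.ltb_spec (rho a) (S (rho b))); [|destruct (Nat.ltb_spec (S (rho b)) (rho a))];
    [..|discriminate]; (destruct beta; [|discriminate]);
    enough (sum_upto rho n < sum_upto sg n) by lia.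
  - apply (sum_upto_lt _ _ _ a); auto. specialize (Hlow b). lia.
  - apply (sum_upto_lt _ _ _ b); auto. specialize (Hlow a). lia.
Qed.

End Relax.

Section Pass.
Variables (n : nat) (Sigma : list implication).
Hypothesis Hwf : wf_base n Sigma.

Lemma relax_premises_progress A b s s' : In (A, b) Sigma ->
  estimate_inv n Sigma s -> relax_premises A b s = Some s' ->
  estimate_inv n Sigma s' /\ (s' = s /\ (forall a, In a A -> satisfied a b s) \/ progress s s').
Proof.
  intros HAb. destruct (Hwf A b HAb) as [Hb HA].
  apply (fold_opt_progress _ _ _ (fun a => satisfied a b)). intros a t t' Ha.
  apply relax_progress; auto. intros sg Hsg. exact (Hsg A b HAb a Ha).
Qed.

Lemma relax_premises_defined A b s : In (A, b) Sigma -> (exists sg, is_rank Sigma sg) ->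
  estimate_inv n Sigma s -> relax_premises A b s <> None.
Proof.
  intros HAb Hex. destruct (Hwf A b HAb) as [Hb HA].
  apply fold_opt_defined.
  - intros a t t' Ha Ht Hr.
    exact (proj1 (relax_progress n Sigma a b (HA a Ha) Hb (fun sg Hsg => Hsg A b HAb a Ha)
                    t t' Ht Hr)).
  - intros a t Ha. apply relax_defined; auto. intros sg Hsg. exact (Hsg A b HAb a Ha).
Qed.

Lemma relax_pass_progress rho beta ch s' : estimate_inv n Sigma (rho, beta, ch) ->
  relax_pass Sigma (rho, beta, ch) = Some s' ->
  estimate_inv n Sigma s' /\
  (s' = (rho, beta, ch) /\ is_rank Sigma rho \/ progress (rho, beta, ch) s').
Proof.
  intros Hs Hp.
  destruct (fold_opt_progress _ (fun ab => relax_premises (fst ab) (snd ab))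
              (estimate_inv n Sigma)
              (fun ab t => forall a, In a (fst ab) -> satisfied a (snd ab) t) Sigma)
    with (2 := Hs) (3 := Hp) as [Hs' [[-> Hall]|Hprog]].
  - intros [A b] t t' HAb. apply relax_premises_progress, HAb.
  - split; [exact Hs'|left; split; [reflexivity|]].
    intros A b HAb a Ha. exact (Hall (A, b) HAb a Ha).
  - split; [exact Hs'|now right].
Qed.

Lemma relax_pass_defined s : (exists sg, is_rank Sigma sg) ->
  estimate_inv n Sigma s -> relax_pass Sigma s <> None.
Proof.
  intros Hex. apply fold_opt_defined.
  - intros [A b] t t' HAb Ht Hr. exact (proj1 (relax_premises_progress A b t t' HAb Ht Hr)).
  - intros [A b] t HAb. apply relax_premises_defined; auto.
Qed.

End Pass.

(** * The program *)

Definition reaches (P : program) (c : config) (Q : config -> Prop) (k : nat) : Prop :=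
  exists t, t <= k /\ Q (exec P t c).

Lemma exec_add P t1 t2 c : exec P (t1 + t2) c = exec P t2 (exec P t1 c).
Proof. revert c; induction t1; intros c; cbn; auto. Qed.

Lemma reaches_now P c (Q : config -> Prop) k : Q c -> reaches P c Q k.
Proof. intros HQ; exists 0; split; [lia|exact HQ]. Qed.

Lemma reaches_step P c Q k : 1 <= k -> reaches P (step P c) Q (k - 1) -> reaches P c Q k.
Proof. intros Hk [t [Ht HQ]]; exists (S t); split; [lia|exact HQ]. Qed.

Lemma reaches_seq P c (Q1 Q2 : config -> Prop) k1 k :
  reaches P c Q1 k1 -> k1 <= k -> (forall c', Q1 c' -> reaches P c' Q2 (k - k1)) ->
  reaches P c Q2 k.
Proof.
  intros [t1 [Ht1 HQ1]] Hk H2. destruct (H2 _ HQ1) as [t2 [Ht2 HQ2]].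
  exists (t1 + t2); split; [lia|]. now rewrite exec_add.
Qed.

Lemma reaches_mono P c (Q : config -> Prop) k1 k2 :
  k1 <= k2 -> reaches P c Q k1 -> reaches P c Q k2.
Proof. intros Hk [t [Ht HQ]]; exists t; split; [lia|exact HQ]. Qed.

Lemma reaches_impl P c (Q1 Q2 : config -> Prop) k :
  (forall c, Q1 c -> Q2 c) -> reaches P c Q1 k -> reaches P c Q2 k.
Proof. intros HQ [t [Ht HQ1]]; exists t; split; auto. Qed.

Lemma add_loop_spec P l d s : d <> s ->
  nth_error P l = Some (Jz s (4 + l)) -> nth_error P (1 + l) = Some (Inc d) ->
  nth_error P (2 + l) = Some (Dec s) -> nth_error P (3 + l) = Some (Jmp l) ->
  forall R M, reaches P (Cfg l R M)
    (fun c => c = Cfg (4 + l) (upd (upd R d (R d + R s)) s 0) M) (4 * R s + 1).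
Proof.
  intros Hds H0 H1 H2 H3 R M. cbn [Nat.add] in *. remember (R s) as v eqn:Hv. revert R Hv.
  induction v as [|v IH]; intros R Hv.
  - apply reaches_step; [lia|]. unfold step; cbn [pc regs]; rewrite H0, <- Hv; cbn.
    apply reaches_now. f_equal. apply functional_extensionality; intros j.
    unfold upd. destruct (Nat.eqb_spec j s) as [->|]; [auto|].
    destruct (Nat.eqb_spec j d) as [->|]; [lia|auto].
  - apply reaches_step; [lia|]. unfold step; cbn [pc regs]; rewrite H0, <- Hv; cbn.
    apply reaches_step; [lia|]. unfold step; cbn [pc]; rewrite H1; cbn.
    apply reaches_step; [lia|]. unfold step; cbn [pc]; rewrite H2; cbn.
    apply reaches_step; [lia|]. unfold step; cbn [pc]; rewrite H3; cbn.
    set (R' := upd (upd R d (S (R d))) s (pred (upd R d (S (R d)) s))).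
    eapply reaches_mono; [|eapply reaches_impl; [|apply (IH R')]].
    + lia.
    + intros c ->. f_equal. apply functional_extensionality; intros j.
      unfold R', upd. destruct (Nat.eqb_spec j s); [auto|].
      destruct (Nat.eqb_spec j d) as [->|]; [|auto].
      rewrite (proj2 (Nat.eqb_neq d s) Hds), Nat.eqb_refl. lia.
    + unfold R'. rewrite upd_same, upd_other by auto. lia.
Qed.

Definition mem_with (w : list nat) (rho : nat -> nat) : nat -> nat :=
  fun i => if i <? length w then nth i w 0 else rho (i - length w).

Lemma mem_with_input w rho i : i < length w -> mem_with w rho i = nth i w 0.
Proof. unfold mem_with. intros Hi. now destruct (Nat.ltb_spec i (length w)); [|lia]. Qed.

Lemma mem_with_estimate w rho x : mem_with w rho (length w + x) = rho x.
Proof.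
  unfold mem_with. destruct (Nat.ltb_spec (length w + x) (length w)); [lia|]. f_equal; lia.
Qed.

Lemma upd_mem_with w rho x v : upd (mem_with w rho) (length w + x) v = mem_with w (upd rho x v).
Proof.
  apply functional_extensionality; intros i. unfold upd, mem_with.
  destruct (Nat.ltb_spec i (length w)).
  - destruct (Nat.eqb_spec i (length w + x)); [lia|auto].
  - destruct (Nat.eqb_spec i (length w + x)), (Nat.eqb_spec (i - length w) x); auto; lia.
Qed.

Lemma init_mem_with w : (fun i => nth i w 0) = mem_with w (fun _ => 0).
Proof.
  apply functional_extensionality; intros i. unfold mem_with.
  destruct (Nat.ltb_spec i (length w)); [reflexivity|]. now apply nth_overflow.
Qed.

Lemma skipn_eq_app (A l w : list nat) p : skipn p w = A ++ l ->
  (forall i, i < length A -> p + i < length w /\ nth (p + i) w 0 = nth i A 0) /\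
  skipn (p + length A) w = l.
Proof.
  intros H. split.
  - intros i Hi. split.
    + assert (E := length_skipn p w). rewrite H, length_app in E. lia.
    + rewrite <- nth_skipn, H, app_nth1; auto.
  - rewrite Nat.add_comm, <- skipn_skipn, H, skipn_app, skipn_all, Nat.sub_diag. reflexivity.
Qed.

Lemma skipn_encode_impl w p A b rest :
  skipn p w = flat_map encode_impl ((A, b) :: rest) ->
  p < length w /\ nth p w 0 = length A /\
  (forall i, i < length A -> 1 + p + i < length w /\ nth (1 + p + i) w 0 = nth i A 0) /\
  1 + p + length A < length w /\ nth (1 + p + length A) w 0 = b /\
  skipn (2 + p + length A) w = flat_map encode_impl rest.
Proof.
  intros Hw.
  assert (Hw' : skipn p w = [length A] ++ A ++ [b] ++ flat_map encode_impl rest)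
    by (rewrite Hw; cbn; unfold encode_impl; cbn; now rewrite <- app_assoc).
  destruct (skipn_eq_app _ _ w p Hw') as [Hlen Hw1].
  destruct (Hlen 0 ltac:(cbn; lia)) as [Hp Hnp]. rewrite Nat.add_0_r in Hp, Hnp.
  cbn [length] in Hw1.
  destruct (skipn_eq_app _ _ w _ Hw1) as [HA Hw2].
  destruct (skipn_eq_app [b] _ w _ Hw2) as [Hb Hw3].
  destruct (Hb 0 ltac:(cbn; lia)) as [Hb1 Hb2]. rewrite Nat.add_0_r in Hb1, Hb2.
  cbn [length] in Hw3.
  split; [exact Hp|split; [exact Hnp|split; [|split; [|split]]]].
  - intros i Hi. replace (1 + p + i) with (p + 1 + i) by lia. now apply HA.
  - replace (1 + p + length A) with (p + 1 + length A) by lia. exact Hb1.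
  - replace (1 + p + length A) with (p + 1 + length A) by lia. exact Hb2.
  - replace (2 + p + length A) with (p + 1 + length A + 1) by lia. exact Hw3.
Qed.

(* Register roles: 0 and 1 hold the constants 0 and 1; 2 = n; 3 = |Sigma|; 4 = L, the
   length of the input word, where the estimate rho is stored (M[L + x] = rho x);
   5 = budget; 6 = changed flag; 7 = read pointer into the input; 8 = implications
   left; 9 = |A|; 10 = address of b; 12 = b; 13 = premises left; 14 = a;
   15, 16 = L + a, L + b; 17 = rho a; 18 = rho b + 1; 19, 20 = comparison counters;
   11 and 21 to 24 = loop counters and copy pointers.
   On failure the program jumps to 97; otherwise it copies rho to M[1 .. n] and sets
   M[0] := 1. *)
Definition prog : program := [
 (*0*) Inc 1; Ld 2 0; Ld 3 1; Mov 7 1; Inc 7; Mov 8 3;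
 (*6*) Jz 8 16; Ld 9 7; Jz 9 12; Inc 7; Dec 9; Jmp 8;
 (*12*) Inc 7; Inc 7; Dec 8; Jmp 6;
 (*16*) Mov 4 7; Mov 21 2;
 (*18*) Jz 21 26; Mov 11 2; Jz 11 24; Inc 5; Dec 11; Jmp 20; Dec 21; Jmp 18;
 (*26*) Mov 6 0; Mov 7 1; Inc 7; Mov 8 3;
 (*30*) Jz 8 83; Ld 9 7; Inc 7; Mov 10 7; Mov 11 9;
 (*35*) Jz 11 39; Inc 10; Dec 11; Jmp 35;
 (*39*) Ld 12 10; Mov 13 9;
 (*41*) Jz 13 80; Ld 14 7; Inc 7; Dec 13;
 (*45*) Mov 15 4; Mov 11 14;
 (*47*) Jz 11 51; Inc 15; Dec 11; Jmp 47;
 (*51*) Ld 17 15; Mov 16 4; Mov 11 12;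
 (*54*) Jz 11 58; Inc 16; Dec 11; Jmp 54;
 (*58*) Ld 18 16; Inc 18; Mov 19 17; Mov 20 18;
 (*62*) Jz 19 67; Jz 20 69; Dec 19; Dec 20; Jmp 62;
 (*67*) Jz 20 41; Jmp 75;
 (*69*) Jz 5 97; Dec 5; Mov 6 1; Dec 17; St 16 17; Jmp 41;
 (*75*) Jz 5 97; Dec 5; Mov 6 1; St 15 18; Jmp 41;
 (*80*) Inc 7; Dec 8; Jmp 30;
 (*83*) Jz 6 85; Jmp 26;
 (*85*) Mov 22 4; Mov 23 1; Mov 21 2;
 (*88*) Jz 21 95; Ld 24 22; St 23 24; Inc 22; Inc 23; Dec 21; Jmp 88;
 (*95*) St 0 1; Jmp 98;
 (*97*) St 0 0 ].

Ltac regs_simpl :=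
  cbn [upd Nat.eqb] in *;
  repeat match goal with H : ?R ?r = _ |- context [?R ?r] => is_var R; rewrite H end;
  cbn [upd Nat.eqb].

(* Rewriting [k - 1 - 1] to [k - 2] keeps the remaining step budget a single subtraction,
   which [lia] handles without case splits. *)
Ltac run :=
  regs_simpl; apply reaches_step; [lia|]; rewrite <- ?Nat.sub_add_distr; cbn [Nat.add];
  cbn [step pc regs mem nth_error prog]; regs_simpl.

Ltac case_in H :=
  simpl in H;
  repeat match type of H with
  | _ \/ _ => destruct H as [<-|H]
  | False => destruct H
  end.

Ltac use_frame H := regs_simpl; rewrite ?H by (cbn; tauto); regs_simpl.

Ltac upd_ext :=
  apply functional_extensionality; intro;
  unfold upd; repeat match goal with |- context [?i =? ?j] => destruct (Nat.eqb_spec i j) end;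
  subst; (congruence || lia).

Lemma compare_spec x : forall y R M, R 19 = x -> R 20 = y ->
  reaches prog (Cfg 62 R M)
    (fun c => c = Cfg (if x <? y then 75 else if y <? x then 69 else 41)
                      (upd (upd R 19 (x - y)) 20 (y - x)) M)
    (5 * x + 4).
Proof.
  induction x as [|x IH]; intros y R M Hx Hy; run; destruct y as [|y].
  - run. apply reaches_now. f_equal. upd_ext.
  - run. run. apply reaches_now. f_equal. upd_ext.
  - run. apply reaches_now. f_equal. upd_ext.
  - run. run. run. run.
    eapply reaches_mono; [|eapply reaches_impl; [|apply (IH y _ M)]]; regs_simpl; auto; [lia|].
    intros c ->. f_equal. upd_ext.
Qed.

Lemma relax_spec w rho beta ch a b R :
  R 0 = 0 -> R 1 = 1 -> R 4 = length w -> R 14 = a -> R 12 = b -> R 5 = beta -> R 6 = ch ->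
  reaches prog (Cfg 45 R (mem_with w rho))
    (fun c => match relax a b (rho, beta, ch) with
       | None => pc c = 97 /\ regs c 0 = 0
       | Some (rho', beta', ch') =>
           pc c = 41 /\ mem c = mem_with w rho' /\ regs c 5 = beta' /\ regs c 6 = ch' /\
           forall r, In r [0; 1; 2; 3; 4; 7; 8; 12; 13] -> regs c r = R r
       end)
    (4 * a + 4 * b + 5 * rho a + 30).
Proof.
  intros H0 H1 H4 Ha Hb Hbe Hch.
  run. run.
  eapply reaches_seq; [apply (add_loop_spec prog 47 15 11); try reflexivity; discriminate| |].
  { regs_simpl. lia. }
  intros c' ->.
  run. run. run.
  eapply reaches_seq; [apply (add_loop_spec prog 54 16 11); try reflexivity; discriminate| |].
  { regs_simpl. lia. }
  intros c' ->.
  run. rewrite mem_with_estimate. run. rewrite mem_with_estimate. run. run.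
  eapply reaches_seq; [apply (compare_spec (rho a) (S (rho b))); regs_simpl; reflexivity|lia|].
  intros c' ->. unfold relax.
  destruct (Nat.ltb_spec (rho a) (S (rho b))); [|destruct (Nat.ltb_spec (S (rho b)) (rho a))].
  - run. destruct beta as [|beta']; cbn.
    + apply reaches_now. cbn. auto.
    + run. run. run. rewrite upd_mem_with. run. apply reaches_now. cbn.
      repeat split; auto. intros r Hr. case_in Hr; regs_simpl; auto.
  - run. destruct beta as [|beta']; cbn.
    + apply reaches_now. cbn. auto.
    + run. run. run. run. rewrite upd_mem_with. run. apply reaches_now. cbn.
      repeat split; auto. intros r Hr. case_in Hr; regs_simpl; auto.
  - apply reaches_now. cbn. repeat split; auto. intros r Hr. case_in Hr; regs_simpl; auto.
Qed.

Lemma premises_spec w b K V A : forall p rho beta ch R,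
  R 0 = 0 -> R 1 = 1 -> R 4 = length w -> R 7 = p -> R 12 = b -> R 13 = length A ->
  R 5 = beta -> R 6 = ch ->
  (forall i, i < length A -> p + i < length w /\ nth (p + i) w 0 = nth i A 0) ->
  (forall a, In a A -> a < K) -> b < K -> bounded V (rho, beta, ch) ->
  reaches prog (Cfg 41 R (mem_with w rho))
    (fun c => match relax_premises A b (rho, beta, ch) with
       | None => pc c = 97 /\ regs c 0 = 0
       | Some (rho', beta', ch') =>
           pc c = 80 /\ mem c = mem_with w rho' /\ regs c 5 = beta' /\ regs c 6 = ch' /\
           regs c 7 = p + length A /\ forall r, In r [0; 1; 2; 3; 4; 8; 12] -> regs c r = R r
       end)
    (length A * (8 * K + 5 * V + 40) + 1).
Proof.
  induction A as [|a A IH]; intros p rho beta ch R H0 H1 H4 H7 H12 H13 H5 H6 HA HK Hb HV;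
    cbn [length] in H13 |- *.
  - run. apply reaches_now. cbn.
    repeat split; auto; lia.
  - run. run.
    destruct (HA 0 ltac:(cbn; lia)) as [Hlt Hnth]. rewrite Nat.add_0_r in Hlt, Hnth.
    rewrite mem_with_input, Hnth by exact Hlt. cbn [nth].
    run. run.
    assert (Ha : a < K) by (apply HK; now left).
    assert (Hra : rho a <= V) by (specialize (HV a); lia).
    eapply reaches_seq;
      [apply (relax_spec w rho beta ch a b); regs_simpl; auto|cbn [length]; nia|].
    rewrite relax_premises_cons.
    destruct (relax a b (rho, beta, ch)) as [[[rho1 beta1] ch1]|] eqn:E;
      [|intros c Hc; now apply reaches_now].
    intros [p' R' M'] [Hp [HM [E5 [E6 Hframe]]]]; cbn in Hp, HM, E5, E6, Hframe; subst p' M'.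
    eapply reaches_mono; [|eapply reaches_impl; [|apply (IH (S p) rho1 beta1 ch1 R')]].
    + cbn [length]. nia.
    + destruct (relax_premises A b (rho1, beta1, ch1)) as [[[rho2 beta2] ch2]|]; [|auto].
      intros c [Q1 [Q2 [Q3 [Q4 [Q5 Q6]]]]].
      repeat split; auto; [rewrite Q5; cbn [length]; lia|].
      intros r Hr. rewrite Q6, Hframe by (case_in Hr; cbn; tauto). case_in Hr; auto.
    + now use_frame Hframe.
    + now use_frame Hframe.
    + now use_frame Hframe.
    + use_frame Hframe. lia.
    + now use_frame Hframe.
    + use_frame Hframe. lia.
    + exact E5.
    + exact E6.
    + intros i Hi. destruct (HA (S i) ltac:(cbn; lia)) as [Hi1 Hi2].
      split; [lia|]. replace (S p + i) with (p + S i) by lia. exact Hi2.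
    + intros x Hx; apply HK; now right.
    + exact Hb.
    + exact (relax_bounded V a b _ _ HV E).
Qed.

Fixpoint pass_cost (Sigma : list implication) (c : nat) : nat :=
  match Sigma with
  | [] => 1
  | ab :: Sigma' => length (fst ab) * c + 4 * length (fst ab) + 20 + pass_cost Sigma' c
  end.

Lemma pass_spec w K V rest : forall p rho beta ch R,
  R 0 = 0 -> R 1 = 1 -> R 4 = length w -> R 7 = p -> R 8 = length rest ->
  R 5 = beta -> R 6 = ch ->
  skipn p w = flat_map encode_impl rest ->
  (forall A b, In (A, b) rest -> b < K /\ forall a, In a A -> a < K) ->
  bounded V (rho, beta, ch) ->
  reaches prog (Cfg 30 R (mem_with w rho))
    (fun c => match relax_pass rest (rho, beta, ch) with
       | None => pc c = 97 /\ regs c 0 = 0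
       | Some (rho', beta', ch') =>
           pc c = 83 /\ mem c = mem_with w rho' /\ regs c 5 = beta' /\ regs c 6 = ch' /\
           forall r, In r [0; 1; 2; 3; 4] -> regs c r = R r
       end)
    (pass_cost rest (8 * K + 5 * V + 40)).
Proof.
  induction rest as [|[A b] rest IH]; intros p rho beta ch R H0 H1 H4 H7 H8 H5 H6 Hw HK HV;
    cbn [length] in H8; cbn [pass_cost fst snd].
  - run. apply reaches_now. cbn. repeat split; auto.
  - destruct (skipn_encode_impl w p A b rest Hw)
      as [Hp [HnA [HA [Hpb [Hnb Hw']]]]].
    destruct (HK A b (or_introl eq_refl)) as [HbK HAK].
    run. run. rewrite mem_with_input, HnA by exact Hp. run. run. run.
    eapply reaches_seq; [apply (add_loop_spec prog 35 10 11); try reflexivity; discriminate| |].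
    { regs_simpl. lia. }
    intros c' ->.
    cbn [Nat.add] in Hpb, Hnb. run. rewrite mem_with_input, Hnb by exact Hpb. run.
    eapply reaches_seq; [apply (premises_spec w b K V A (S p) rho beta ch); regs_simpl; auto|nia|].
    rewrite relax_pass_cons.
    destruct (relax_premises A b (rho, beta, ch)) as [[[rho1 beta1] ch1]|] eqn:E;
      [|intros c Hc; now apply reaches_now].
    intros [p' R' M'] [Hpc [HM [E5 [E6 [E7 Hframe]]]]].
    cbn in Hpc, HM, E5, E6, E7, Hframe. subst p' M'.
    run. run. run.
    eapply reaches_mono; [|eapply reaches_impl; [|apply (IH (2 + p + length A) rho1 beta1 ch1)]].
    + lia.
    + destruct (relax_pass rest (rho1, beta1, ch1)) as [[[rho2 beta2] ch2]|]; [|auto].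
      intros c [Q1 [Q2 [Q3 [Q4 Q5]]]]. repeat split; auto.
      intros r Hr. rewrite Q5 by exact Hr. case_in Hr; use_frame Hframe; auto.
    + now use_frame Hframe.
    + now use_frame Hframe.
    + now use_frame Hframe.
    + regs_simpl. lia.
    + use_frame Hframe. lia.
    + now regs_simpl.
    + now regs_simpl.
    + exact Hw'.
    + intros A' b' HI. apply HK. now right.
    + exact (relax_premises_bounded V A b _ _ HV E).
Qed.

Lemma rounds_spec n Sigma : wf_base n Sigma -> forall beta rho R,
  R 0 = 0 -> R 1 = 1 -> R 3 = length Sigma -> R 4 = length (encode n Sigma) -> R 5 = beta ->
  bounded (n * n) (rho, beta, 0) -> estimate_inv n Sigma (rho, beta, 0) ->
  reaches prog (Cfg 26 R (mem_with (encode n Sigma) rho))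
    (fun c => (pc c = 97 /\ regs c 0 = 0 /\ ~ exists sg, is_rank Sigma sg) \/
              (pc c = 85 /\ (forall r, In r [0; 1; 2; 4] -> regs c r = R r) /\
               exists rho', mem c = mem_with (encode n Sigma) rho' /\ is_rank Sigma rho'))
    ((beta + 1) * (pass_cost Sigma (8 * n + 5 * (n * n) + 40) + 10)).
Proof.
  intros Hwf beta. induction beta as [beta IH] using lt_wf_ind.
  intros rho R H0 H1 H3 H4 H5 HV Hinv.
  set (T := pass_cost Sigma (8 * n + 5 * (n * n) + 40)).
  run. run. run. run.
  eapply (reaches_seq _ _ _ _ T);
    [apply (pass_spec (encode n Sigma) n (n * n) Sigma 2 rho beta 0); regs_simpl; auto|nia|].
  destruct (relax_pass Sigma (rho, beta, 0)) as [[[rho1 beta1] ch1]|] eqn:E.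
  - destruct (relax_pass_progress n Sigma Hwf rho beta 0 _ Hinv E) as [Hinv1 Hdone].
    intros [p' R' M'] [Hpc [HM [E5 [E6 Hframe]]]]; cbn in Hpc, HM, E5, E6, Hframe; subst p' M'.
    destruct ch1 as [|ch1].
    + run. apply reaches_now. right. split; [reflexivity|split].
      * intros r Hr. rewrite Hframe by (case_in Hr; cbn; tauto). case_in Hr; regs_simpl; auto.
      * exists rho1. split; [reflexivity|].
        destruct Hdone as [[Heq Hrank]|[Habs _]]; [|discriminate].
        now injection Heq as -> _.
    + destruct Hdone as [[Heq _]|[_ Hlt]]; [discriminate|].
      run. run.
      eapply reaches_mono; [|eapply reaches_impl; [|apply (IH beta1 Hlt rho1)]].
      * nia.
      * intros c [Hfail|[Hc1 [Hc2 Hc3]]]; [now left|right].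
        split; [exact Hc1|split; [|exact Hc3]].
        intros r Hr. rewrite Hc2 by exact Hr. case_in Hr; use_frame Hframe; auto.
      * now use_frame Hframe.
      * now use_frame Hframe.
      * now use_frame Hframe.
      * now use_frame Hframe.
      * now regs_simpl.
      * exact (relax_pass_bounded _ _ _ _ HV E).
      * exact Hinv1.
  - intros c [Hc1 Hc2]. apply reaches_now. left. split; [exact Hc1|split; [exact Hc2|]].
    intros Hex. exact (relax_pass_defined n Sigma Hwf _ Hex Hinv E).
Qed.

Fixpoint skip_cost (Sigma : list implication) : nat :=
  match Sigma with [] => 1 | ab :: Sigma' => 4 * length (fst ab) + 8 + skip_cost Sigma' end.

Lemma skip_input_spec w rest : forall p R M,
  (forall i, i < length w -> M i = nth i w 0) -> R 7 = p -> R 8 = length rest ->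
  skipn p w = flat_map encode_impl rest ->
  reaches prog (Cfg 6 R M)
    (fun c => pc c = 16 /\ mem c = M /\ regs c 7 = p + length (flat_map encode_impl rest) /\
       forall r, In r [0; 1; 2; 3; 5] -> regs c r = R r)
    (skip_cost rest).
Proof.
  induction rest as [|[A b] rest IH]; intros p R M HM H7 H8 Hw;
    cbn [length] in H8; cbn [skip_cost fst snd].
  - run. apply reaches_now. cbn. repeat split; auto; lia.
  - destruct (skipn_encode_impl w p A b rest Hw) as [Hp [HnA [_ [_ [_ Hw']]]]].
    run. run. rewrite HM, HnA by exact Hp.
    eapply reaches_seq; [apply (add_loop_spec prog 8 7 9); try reflexivity; discriminate| |].
    { regs_simpl. lia. }
    intros c' ->.
    run. run. run. run.
    eapply reaches_mono; [|eapply reaches_impl; [|apply (IH (2 + p + length A))]].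
    + regs_simpl. lia.
    + intros c [Q1 [Q2 [Q3 Q4]]]. split; [exact Q1|split; [exact Q2|split]].
      * rewrite Q3. cbn [flat_map]. rewrite length_app.
        cbn [encode_impl fst snd length]. rewrite length_app. cbn [length]. lia.
      * intros r Hr. rewrite Q4 by exact Hr. case_in Hr; regs_simpl; auto.
    + exact HM.
    + regs_simpl. lia.
    + now regs_simpl.
    + exact Hw'.
Qed.

Lemma budget_spec n : forall i R M, R 21 = i -> R 2 = n ->
  reaches prog (Cfg 18 R M)
    (fun c => pc c = 26 /\ mem c = M /\ regs c 5 = R 5 + i * n /\
       forall r, In r [0; 1; 2; 3; 4] -> regs c r = R r)
    (i * (4 * n + 5) + 1).
Proof.
  induction i as [|i IH]; intros R M H21 H2.
  - run. apply reaches_now. cbn. repeat split; auto; lia.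
  - run. run.
    eapply reaches_seq; [apply (add_loop_spec prog 20 5 11); try reflexivity; discriminate| |].
    { regs_simpl. nia. }
    intros c' ->.
    run. run.
    eapply reaches_mono; [|eapply reaches_impl; [|apply (IH _ M)]].
    + regs_simpl. nia.
    + intros c [Q1 [Q2 [Q3 Q4]]]. split; [exact Q1|split; [exact Q2|split]].
      * rewrite Q3. regs_simpl. lia.
      * intros r Hr. rewrite Q4 by exact Hr. case_in Hr; regs_simpl; auto.
    + regs_simpl. lia.
    + now regs_simpl.
Qed.

Lemma copy_spec L rho n : forall k d R M,
  k + d = n -> R 22 = L + d -> R 23 = 1 + d -> R 21 = k -> 1 <= L ->
  (forall x, d <= x -> M (L + x) = rho x) -> (forall x, x < d -> M (1 + x) = rho x) ->
  reaches prog (Cfg 88 R M)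
    (fun c => pc c = 95 /\ (forall x, x < n -> mem c (1 + x) = rho x) /\
       forall r, In r [0; 1] -> regs c r = R r)
    (7 * k + 1).
Proof.
  induction k as [|k IH]; intros d R M Hkd H22 H23 H21 HL Hhi Hlo.
  - run. apply reaches_now. cbn. repeat split; auto. intros x Hx. apply Hlo. lia.
  - run. run. run. run. run. run. run.
    eapply reaches_mono; [|eapply reaches_impl; [|apply (IH (S d))]].
    + lia.
    + intros c [Q1 [Q2 Q3]]. split; [exact Q1|split; [exact Q2|]].
      intros r Hr. rewrite Q3 by exact Hr. case_in Hr; regs_simpl; auto.
    + lia.
    + regs_simpl. lia.
    + regs_simpl. lia.
    + now regs_simpl.
    + exact HL.
    + intros x Hx. rewrite upd_other by lia. apply Hhi. lia.
    + intros x Hx. destruct (Nat.eq_dec x d) as [->|Hne].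
      * rewrite upd_same. apply Hhi. lia.
      * rewrite upd_other by lia. apply Hlo. lia.
Qed.

Definition prog_cost (n : nat) (Sigma : list implication) : nat :=
  skip_cost Sigma + n * (4 * n + 5) +
  (n * n + 1) * (pass_cost Sigma (8 * n + 5 * (n * n) + 40) + 10) + 7 * n + 30.

Lemma halted_at_98 R M : halted prog (Cfg 98 R M).
Proof. unfold halted, prog. cbn. lia. Qed.

Lemma reject_spec Sigma R M : R 0 = 0 -> ~ (exists sg, is_rank Sigma sg) ->
  reaches prog (Cfg 97 R M) (fun c => halted prog c /\ correct_output Sigma (mem c)) 1.
Proof.
  intros H0 Hno. run. apply reaches_now. split; [apply halted_at_98|].
  unfold correct_output; cbn.
  split; [split; [intros Hex; now contradiction Hno|now intros []]|now intros []].
Qed.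

Lemma accept_spec n Sigma rho R M L : wf_base n Sigma -> is_rank Sigma rho ->
  R 0 = 0 -> R 1 = 1 -> R 2 = n -> R 4 = L -> 1 <= L -> (forall x, M (L + x) = rho x) ->
  reaches prog (Cfg 85 R M) (fun c => halted prog c /\ correct_output Sigma (mem c))
    (7 * n + 6).
Proof.
  intros Hwf Hrank H0 H1 H2 H4 HL HM.
  run. run. run.
  eapply reaches_seq; [apply (copy_spec L rho n n 0); regs_simpl; auto; lia|lia|].
  intros [p' R' M'] [Hpc [HM' Hframe]]; cbn in Hpc, HM', Hframe; subst p'.
  assert (HR' : R' 0 = 0 /\ R' 1 = 1) by (split; use_frame Hframe; reflexivity).
  destruct HR' as [H0' H1'].
  run. run. apply reaches_now. split; [apply halted_at_98|].
  unfold correct_output. cbn [mem]. regs_simpl.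
  split; [split; [intros _; discriminate|intros _; now exists rho]|intros _].
  intros A b HAb a Ha. destruct (Hwf A b HAb) as [Hb HA].
  rewrite !HM' by auto. exact (Hrank A b HAb a Ha).
Qed.

Lemma prog_spec n Sigma : wf_base n Sigma ->
  reaches prog (init (encode n Sigma))
    (fun c => halted prog c /\ correct_output Sigma (mem c)) (prog_cost n Sigma).
Proof.
  intros Hwf. unfold init, prog_cost. rewrite init_mem_with.
  set (w := encode n Sigma).
  assert (Hw0 : mem_with w (fun _ => 0) 0 = n) by reflexivity.
  assert (Hw1 : mem_with w (fun _ => 0) 1 = length Sigma) by reflexivity.
  run. run. rewrite Hw0. run. rewrite Hw1. run. run. run.
  eapply reaches_seq; [apply (skip_input_spec w Sigma 2); regs_simpl; auto|lia|].
  { intros i Hi. now apply mem_with_input. }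
  intros [p' R1 M'] [Hpc [HM [E7 Hframe]]]; cbn in Hpc, HM, E7, Hframe; subst p' M'.
  run. run.
  eapply reaches_seq; [apply (budget_spec n n); use_frame Hframe; auto|lia|].
  intros [p' R2 M'] [Hpc [HM [E5 Hframe2]]]; cbn in Hpc, HM, E5, Hframe2; subst p' M'.
  eapply reaches_seq.
  { apply (rounds_spec n Sigma Hwf (n * n) (fun _ => 0));
      try (use_frame Hframe2; use_frame Hframe; first [reflexivity|lia]).
    - intros x; cbn; lia.
    - apply estimate_inv_init. }
  { lia. }
  intros [p' R3 M3] [[Hpc [H0 Hno]]|[Hpc [Hframe3 [rho [HM Hrank]]]]].
  - cbn in Hpc, H0. subst p'. eapply reaches_mono; [|now apply reject_spec]. lia.
  - cbn in Hpc, Hframe3, HM. subst p' M3.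
    eapply reaches_mono; [|apply (accept_spec n Sigma rho R3 _ (length w) Hwf Hrank)].
    { lia. }
    all: try (rewrite Hframe3 by (cbn; tauto); use_frame Hframe2; use_frame Hframe; reflexivity).
    + unfold w. cbn. lia.
    + intros x. apply mem_with_estimate.
Qed.

(** * Running time *)

Definition sigma_size (Sigma : list implication) : nat :=
  fold_right (fun ab s => length (fst ab) + 1 + s) 0 Sigma.

Lemma skip_cost_le Sigma : skip_cost Sigma <= 8 * sigma_size Sigma + 1.
Proof. induction Sigma as [|[A b] Sigma IH]; simpl in *; lia. Qed.

Lemma pass_cost_le Sigma c : pass_cost Sigma c <= sigma_size Sigma * (c + 24) + 1.
Proof. induction Sigma as [|[A b] Sigma IH]; simpl in *; nia. Qed.

Lemma prog_cost_le n Sigma : prog_cost n Sigma <= 1000 * (base_size n Sigma + 1) ^ 5.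
Proof.
  assert (Hs : base_size n Sigma = n + sigma_size Sigma) by reflexivity.
  set (z := sigma_size Sigma) in Hs.
  set (N := base_size n Sigma + 1).
  assert (Hn : n < N) by lia. assert (Hz : z < N) by lia.
  assert (HN5 : N ^ 5 = N * N * N * N * N) by (cbn; ring).
  assert (Hskip := skip_cost_le Sigma).
  assert (Hpass := pass_cost_le Sigma (8 * n + 5 * (n * n) + 40)). fold z in Hskip, Hpass.
  assert (Hround : pass_cost Sigma (8 * n + 5 * (n * n) + 40) + 10 <= 88 * (N * N * N)).
  { assert (z * (8 * n) <= 8 * (N * N)) by nia.
    assert (z * (5 * (n * n)) <= 5 * (N * N * N)) by nia.
    assert (N <= N * N <= N * N * N) by nia. nia. }
  assert (Hrounds : (n * n + 1) * (pass_cost Sigma (8 * n + 5 * (n * n) + 40) + 10)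
                    <= (2 * (N * N)) * (88 * (N * N * N)))
    by (apply Nat.mul_le_mono; nia).
  unfold prog_cost. rewrite HN5. nia.
Qed.

Theorem proposition5 :
  exists (P : program) (c k : nat),
    forall (n : nat) (Sigma : list implication),
      wf_base n Sigma ->
      exists t : nat,
        t <= c * (base_size n Sigma + 1) ^ k /\
        halted P (exec P t (init (encode n Sigma))) /\
        correct_output Sigma (mem (exec P t (init (encode n Sigma)))).
Proof.
  exists prog, 1000, 5. intros n Sigma Hwf.
  destruct (prog_spec n Sigma Hwf) as [t [Ht Hout]].
  exists t. split; [|exact Hout].
  eapply Nat.le_trans; [exact Ht|apply prog_cost_le].
Qed.
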